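(* Let $(\star)$ be a linear system over $\mathbb{F}_q$ with coefficient matrix $A\in\mathbb{F}_q^{m\times k}$ which is of type (RC), non-degenerate and irreducible, with $\ell$ column equivalence classes. Let $S\subseteq\mathbb{F}_q^n$ with $|S|\ge q^{1+\frac{\ell-1}{\ell}n}$, and assume that at least one of the following holds: (i) $\ell=m+1$; (ii) every column equivalence class sums to zero. Then there exists a solution $(x_1,\dots,x_k)\in S^k$ of $(\star)$ such that every $b\in\mathrm{Ann}_{\mathrm{bal}}(x_1,\dots,x_k)$ that preserves the column equivalence classes of $(\star)$ lies in the row space of $A$.
   Context: Solutions are tuples in $(\mathbb{F}_q^n)^k$ with $\sum_ja_{ij}x_j=0$ for all $i$. $\mathrm{Ann}_{\mathrm{bal}}(x_1,\dots,x_k)=\{b\in\mathbb{F}_q^k:\sum_jb_jx_j=0,\ \sum_jb_j=0\}$. Indices $j,j'$ are equivalent if columns $j,j'$ of $A$ are nonzero scalar multiples of one another; classes are column equivalence classes; a class sums to zero if its columns add up to the zero vector. A vector $b$ preserves the column equivalence classes if the matrix obtained by appending $b$ as an extra row to $A$ has the same column equivalence classes as $A$. Type (RC): every row of $A$ sums to $0$ and at most one column equivalence class has size $1$. Non-degenerate: rows of $A$ linearly independent and no zero column. Irreducible: not equivalent (same row space) to a system whose variables split into at least two classes with each equation only using (nonzero coefficients on) variables of one class. *)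

From HB Require Import structures.
From mathcomp Require Import all_boot all_order all_algebra.
Set Implicit Arguments. Unset Strict Implicit. Unset Printing Implicit Defensive.
Import GRing.Theory.
Local Open Scope ring_scope.

Section LinSys.
Variables (F : finFieldType) (m k n : nat).
Implicit Types (A : 'M[F]_(m, k)).

Definition colequiv p (M : 'M[F]_(p, k)) (j j' : 'I_k) : bool :=
  [exists c : F, (c != 0) && (col j M == c *: col j' M)].

Definition colclass p (M : 'M[F]_(p, k)) (j : 'I_k) : {set 'I_k} :=
  [set j' | colequiv M j j'].

Definition colclasses p (M : 'M[F]_(p, k)) : {set {set 'I_k}} :=
  [set colclass M j | j : 'I_k].

Definition nclasses A : nat := #|colclasses A|.

Definition class_sums_zero A (C : {set 'I_k}) : Prop :=
  \sum_(j in C) col j A = 0.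

Definition typeRC A : Prop :=
  (forall i : 'I_m, \sum_(j < k) A i j = 0) /\
  (#|[set C in colclasses A | #|C| == 1%N]| <= 1)%N.

Definition sys_nondegenerate A : Prop :=
  row_free A /\ forall j : 'I_k, col j A != 0.

Definition sys_reducible A : Prop :=
  exists (p : nat) (B : 'M[F]_(p, k)) (c : 'I_k -> nat),
    (B == A)%MS /\
    (exists j j' : 'I_k, c j != c j') /\
    (forall i : 'I_p, exists t : nat, forall j : 'I_k, B i j != 0 -> c j = t).

Definition sys_irreducible A : Prop := ~ sys_reducible A.

Definition is_solution A (x : 'I_k -> 'rV[F]_n) : Prop :=
  forall i : 'I_m, \sum_(j < k) A i j *: x j = 0.

Definition in_Ann_bal (x : 'I_k -> 'rV[F]_n) (b : 'rV[F]_k) : Prop :=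
  \sum_(j < k) b 0 j *: x j = 0 /\ \sum_(j < k) b 0 j = 0.

Definition preserves_classes A (b : 'rV[F]_k) : Prop :=
  forall j j' : 'I_k, colequiv (col_mx A b) j j' = colequiv A j j'.

End LinSys.

From HB Require Import structures.
From mathcomp Require Import all_boot all_order all_algebra.
From mathcomp Require Import zify.
Set Implicit Arguments. Unset Strict Implicit. Unset Printing Implicit Defensive.
Import GRing.Theory.
Local Open Scope ring_scope.

(* Let V be the matrix of one representative column per class, so that
   A = V L with L recording the scalings inside each class.  A class-preserving
   b is u L with u its restriction to the representatives, hence lies in the
   row space of A as soon as u lies in that of V.
   If every class sum vanishes, give each class representative the rows of one
   matrix Z in S^l and the other members the rows of a second matrix Z'; then
   x is a solution iff V (Z - Z') = 0, and it has the required property iff the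
   left kernel of Z - Z' is exactly the row space of V.  Counting the fibres of
   Z |-> V Z over S^l against the differences whose left kernel is strictly
   larger produces such a pair; the density bound is exactly what the count
   needs.
   If some class sum is nonzero and l = m + 1, the constant solution works:
   the vector s of class sums spans the right kernel of V, so the balance
   condition u s = 0 forces u into the row space of V. *)

Lemma leq_card_bigcup (I T : finType) (P : pred I) (U : I -> {set T}) :
  (#|\bigcup_(i | P i) U i| <= \sum_(i | P i) #|U i|)%N.
Proof.
elim/big_rec2: _ => [|i x n _ IH]; first by rewrite cards0.
exact: leq_trans (leq_card_setU _ _) (leq_add (leqnn _) IH).
Qed.

Lemma fibre_pigeonhole (G : finZmodType) (rT : finType) (f : G -> rT)
    (T B : {set G}) :
  (#|rT| * #|B| < #|T|)%N ->
  exists z z', [/\ z \in T, z' \in T, f z = f z' & z - z' \notin B].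
Proof.
move=> ltBT.
pose sep z z' := [&& z \in T, z' \in T, f z == f z' & z - z' \notin B].
have [[z z'] /and4P[zT z'T /eqP fzz' zz'B] | nosep] :=
  pickP (fun zz : G * G => sep zz.1 zz.2); first by exists z, z'.
have fibreB y : (#|[set z in T | f z == y]| <= #|B|)%N.
  have [-> | [z' z'y]] := set_0Vmem [set z in T | f z == y]; first by rewrite cards0.
  rewrite -(card_in_imset (f := fun z => z - z')); last by move=> ? ? _ _ /addIr.
  apply/subset_leq_card/subsetP => _ /imsetP[z zy ->].
  move: zy z'y (nosep (z, z')); rewrite !inE /sep => /andP[-> /eqP <-].
  by case/andP=> -> /eqP ->; rewrite eqxx /= => /negbFE.
move: ltBT; rewrite ltnNge => /negP[].
rewrite -sum1_card (partition_big f predT) //= -sum_nat_const leq_sum // => y _.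
apply: leq_trans (fibreB y); rewrite sum1_card subset_leq_card //.
by apply/subsetP => z; rewrite !inE.
Qed.

Lemma card_mulmx_eq0_le (F : finFieldType) p l n (M : 'M[F]_(p, l)) :
  (#|[set Z : 'M[F]_(l, n) | M *m Z == 0%R]| <= #|F| ^ (n * (l - \rank M)))%N.
Proof.
set K := row_base (kermx M^T).
have sub : [set Z : 'M[F]_(l, n) | M *m Z == 0%R] \subset
           [set (W *m K)^T | W in 'M[F]_(n, \rank (kermx M^T))].
  apply/subsetP => Z; rewrite inE => /eqP MZ.
  have /submxP[W ZW] : (Z^T <= K)%MS.
    by rewrite eq_row_base; apply/sub_kermxP; rewrite -trmx_mul MZ trmx0.
  by apply/imsetP; exists W; rewrite // -ZW trmxK.
apply: leq_trans (subset_leq_card sub) _.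
apply: leq_trans (leq_imset_card _ _) _.
by rewrite card_mx mxrank_ker mxrank_tr.
Qed.

Lemma rank_col_mx_gt (F : fieldType) m l (V : 'M[F]_(m, l)) (mu : 'rV[F]_l) :
  row_free V -> ~~ (mu <= V)%MS -> (m < \rank (col_mx V mu))%N.
Proof.
move=> /eqP rankV Vmu; rewrite -addsmxE -{1}rankV.
have := ltn_leqif (mxrank_leqif_sup (addsmxSl V mu)).
by rewrite addsmx_sub submx_refl Vmu => ->.
Qed.

Lemma card_notsubmx_lt (F : finFieldType) m l (V : 'M[F]_(m, l)) :
  (#|[set mu : 'rV[F]_l | ~~ (mu <= V)%MS]| < #|F| ^ l)%N.
Proof.
have -> : (#|F| ^ l = #|[set: 'rV[F]_l]|)%N by rewrite cardsT card_mx mul1n.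
apply/proper_card; rewrite properT; apply/negP => /eqP allT.
by have := in_setT (0 : 'rV[F]_l); rewrite -allT inE sub0mx.
Qed.

Lemma card_ltmx_kermx (F : finFieldType) m l n (V : 'M[F]_(m, l)) :
  row_free V ->
  (#|[set D : 'M[F]_(l, n) | (V < kermx D)%MS]| * #|F| ^ (m * n)
     < #|F| ^ (l + l.-1 * n))%N.
Proof.
move=> freeV; set B := [set D | _].
set Bmu := [set mu : 'rV[F]_l | ~~ (mu <= V)%MS].
have q_gt0 : (0 < #|F|)%N by apply/card_gt0P; exists 0.
have B_sub : B \subset \bigcup_(mu in Bmu) [set D | col_mx V mu *m D == 0%R].
  apply/subsetP => D; rewrite inE ltmxE => /andP[/sub_kermxP VD /row_subPn[i kerV]].
  apply/bigcupP; exists (row i (kermx D)); first by rewrite inE.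
  by rewrite inE mul_col_mx VD -row_mul mulmx_ker row0 col_mx0.
have [Bmu0 | [mu0]] := set_0Vmem Bmu.
  suff -> : B = set0 by rewrite cards0 expn_gt0 q_gt0.
  by apply/eqP; rewrite -subset0 (subset_trans B_sub) // Bmu0 big_set0.
rewrite inE => /(rank_col_mx_gt freeV)/leq_trans/(_ (rank_leq_col _)) lt_m_l.
have B_le : (#|B| <= #|Bmu| * #|F| ^ (n * (l - m.+1)))%N.
  apply: leq_trans (subset_leq_card B_sub) _; apply: leq_trans (leq_card_bigcup _ _) _.
  rewrite -sum_nat_const; apply: leq_sum => mu; rewrite inE => Vmu.
  apply: leq_trans (card_mulmx_eq0_le _ _) _.
  by rewrite leq_pexp2l // leq_mul2l leq_sub2l ?rank_col_mx_gt ?orbT.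
have -> : (l + l.-1 * n = l + (n * (l - m.+1) + m * n))%N.
  by rewrite [(m * n)%N]mulnC -mulnDr mulnC -subn1; congr (_ + n * _)%N; lia.
rewrite 2!expnD mulnA ltn_pmul2r ?expn_gt0 ?q_gt0 //.
by apply: leq_ltn_trans B_le _; rewrite ltn_pmul2r ?expn_gt0 ?q_gt0 ?card_notsubmx_lt.
Qed.

Lemma card_rows_in (F : finFieldType) l n (S : {set 'rV[F]_n}) :
  #|[set Z : 'M[F]_(l, n) | [forall t, row t Z \in S]]| = (#|S| ^ l)%N.
Proof.
have inj : injective (fun g : {ffun 'I_l -> 'rV[F]_n} => \matrix_t g t).
  by move=> g g' E; apply/ffunP => t; have := congr1 (row t) E; rewrite !rowK.
rewrite -[in RHS](card_ord l) -card_ffun_on -(card_imset _ inj); apply: eq_card => Z.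
rewrite inE; apply/forallP/imsetP => [ZS | [g /ffun_onP gS ->] t]; last by rewrite rowK.
exists [ffun t => row t Z]; first by apply/ffun_onP => t; rewrite ffunE.
by apply/row_matrixP => t; rewrite rowK ffunE.
Qed.

Lemma exists_kermx_pair (F : finFieldType) m l n (V : 'M[F]_(m, l))
    (S : {set 'rV[F]_n}) :
  row_free V -> (#|F| ^ (l + l.-1 * n) <= #|S| ^ l)%N ->
  exists Z Z' : 'M[F]_(l, n),
    [/\ forall t, row t Z \in S, forall t, row t Z' \in S
      & (kermx (Z - Z') == V)%MS].
Proof.
move=> freeV cardS; set T := [set Z : 'M[F]_(l, n) | [forall t, row t Z \in S]].
have [|Z [Z' [ZT Z'T VZZ' notB]]] :=
  fibre_pigeonhole (mulmx V) (T := T) (B := [set D | (V < kermx D)%MS]).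
  by rewrite card_mx mulnC card_rows_in (leq_trans (card_ltmx_kermx n freeV)).
exists Z, Z'; move: ZT Z'T notB; rewrite !inE ltmxE => /forallP ZS /forallP Z'S.
have -> : (V <= kermx (Z - Z'))%MS by rewrite sub_kermx mulmxBr VZZ' subrr.
by rewrite /= negbK => DV; split; rewrite // DV.
Qed.

Section ColumnClasses.
Variables (F : finFieldType) (m k : nat) (A : 'M[F]_(m, k)).

Lemma colequivP j j' :
  reflect (exists2 c, c != 0 & col j A = c *: col j' A) (colequiv A j j').
Proof.
apply: (iffP existsP) => [[c /andP[c0 /eqP E]]|[c c0 E]]; exists c => //.
by rewrite c0 E eqxx.
Qed.

Lemma colequiv_refl j : colequiv A j j.
Proof. by apply/colequivP; exists 1; rewrite ?oner_eq0 ?scale1r. Qed.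

Lemma colequiv_sym j j' : colequiv A j j' -> colequiv A j' j.
Proof.
case/colequivP => c c0 E; apply/colequivP; exists c^-1; first by rewrite invr_eq0.
by rewrite E scalerA mulVf // scale1r.
Qed.

Lemma colequiv_trans j1 j2 j3 :
  colequiv A j1 j2 -> colequiv A j2 j3 -> colequiv A j1 j3.
Proof.
case/colequivP => c c0 E /colequivP[d d0 E']; apply/colequivP.
by exists (c * d); rewrite ?mulf_neq0 // E E' scalerA.
Qed.

Definition crep j := odflt j [pick i | colequiv A j i].

Lemma colequiv_crep j : colequiv A j (crep j).
Proof. by rewrite /crep; case: pickP => [i //|/(_ j)]; rewrite colequiv_refl. Qed.

Lemma crep_eq j j' : colequiv A j j' -> crep j = crep j'.
Proof.
move=> jj'; rewrite /crep (@eq_pick _ _ (colequiv A j')).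
  by case: pickP => [//|/(_ j')]; rewrite colequiv_refl.
move=> i /=; apply/idP/idP; first exact/colequiv_trans/colequiv_sym.
exact: colequiv_trans.
Qed.

Lemma crepK j : crep (crep j) = crep j.
Proof. exact/crep_eq/colequiv_sym/colequiv_crep. Qed.

Lemma colclass_crep j : colclass A (crep j) = colclass A j.
Proof.
apply/setP => i; rewrite !inE; apply/idP/idP; first exact/colequiv_trans/colequiv_crep.
exact/colequiv_trans/colequiv_sym/colequiv_crep.
Qed.

Definition cscale j :=
  odflt 0 [pick c | (c != 0) && (col j A == c *: col (crep j) A)].

Lemma col_cscale j : col j A = cscale j *: col (crep j) A.
Proof.
rewrite /cscale; case: pickP => [c /andP[_ /eqP //] | none].
by case/colequivP: (colequiv_crep j) => c c0 E; have := none c; rewrite c0 E eqxx.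
Qed.

Definition cscaled (c : 'I_k -> F) := forall j, c j = cscale j * c (crep j).

Lemma cscaled_row i : cscaled (A i).
Proof.
by move=> j; have := congr1 (fun v : 'cV_m => v i 0) (col_cscale j); rewrite /= !mxE.
Qed.

Definition creps := [set crep j | j : 'I_k].
Local Notation l := #|creps|.

Lemma crep_in_creps j : crep j \in creps.
Proof. exact: imset_f. Qed.

Definition clrep (t : 'I_l) : 'I_k := enum_val t.
Definition cl j : 'I_l := enum_rank_in (crep_in_creps j) (crep j).

Lemma crep_clrep t : crep (clrep t) = clrep t.
Proof. by rewrite /clrep; have /imsetP[j _ ->] := enum_valP t; rewrite crepK. Qed.

Lemma clrep_cl j : clrep (cl j) = crep j.
Proof. by rewrite /clrep /cl enum_rankK_in // crep_in_creps. Qed.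

Lemma cl_eq j t : (cl j == t) = (crep j == clrep t).
Proof. by rewrite -clrep_cl; apply/eqP/eqP => [-> // | /enum_val_inj]. Qed.

Lemma cl_clrep t : cl (clrep t) = t.
Proof. by apply/eqP; rewrite cl_eq crep_clrep. Qed.

Lemma nclassesE : nclasses A = l.
Proof.
rewrite /nclasses; have -> : colclasses A = colclass A @: creps.
  apply/setP => C; apply/imsetP/imsetP => [[j _ ->] | [_ /imsetP[j _ ->] ->]].
    by exists (crep j); rewrite ?crep_in_creps ?colclass_crep.
  by exists (crep j).
apply: card_in_imset => _ _ /imsetP[j _ ->] /imsetP[j' _ ->] E.
have : crep j' \in colclass A (crep j) by rewrite E inE colequiv_refl.
by rewrite inE => /crep_eq; rewrite !crepK.
Qed.

Definition crow (c : 'I_k -> F) : 'rV[F]_l := \row_t c (clrep t).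
Definition repcols : 'M[F]_(m, l) := \matrix_(i, t) A i (clrep t).
Definition classmx : 'M[F]_(l, k) :=
  \matrix_(t, j) (if cl j == t then cscale j else 0).
Definition csum t := \sum_(j | cl j == t) cscale j.

Lemma row_repcols i : row i repcols = crow (A i).
Proof. by apply/rowP => t; rewrite !mxE. Qed.

Lemma mul_crow_classmx c : cscaled c -> crow c *m classmx = \row_j c j.
Proof.
move=> cc; apply/rowP => j; rewrite !mxE (bigD1 (cl j)) //= big1 => [|t /negbTE tj].
  by rewrite !mxE eqxx addr0 clrep_cl mulrC -cc.
by rewrite !mxE eq_sym tj mulr0.
Qed.

Lemma repcols_classmx : repcols *m classmx = A.
Proof.
apply/row_matrixP => i.
by rewrite row_mul row_repcols (mul_crow_classmx (cscaled_row i)).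
Qed.

Lemma row_free_repcols : row_free A -> row_free repcols.
Proof.
move=> freeA; rewrite /row_free eqn_leq rank_leq_row /=.
by rewrite -{1}(eqP freeA) -{1}repcols_classmx mxrankM_maxl.
Qed.

Lemma cscaled_submx (b : 'rV[F]_k) :
  cscaled (b 0) -> (crow (b 0) <= repcols)%MS -> (b <= A)%MS.
Proof.
move=> bc /(submxMr classmx); rewrite mul_crow_classmx // repcols_classmx.
by congr (_ <= _)%MS; apply/rowP => j; rewrite mxE.
Qed.

Lemma mem_colclass_clrep t j : (j \in colclass A (clrep t)) = (cl j == t).
Proof.
rewrite inE cl_eq; apply/idP/eqP => [/crep_eq <- | <-]; first by rewrite crep_clrep.
exact/colequiv_sym/colequiv_crep.
Qed.

Lemma class_sumE t :
  \sum_(j in colclass A (clrep t)) col j A = csum t *: col (clrep t) A.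
Proof.
rewrite scaler_suml; apply: eq_big => j; first by rewrite mem_colclass_clrep.
by rewrite mem_colclass_clrep => /eqP <-; rewrite clrep_cl col_cscale.
Qed.

Lemma colclass_clrep_in t : colclass A (clrep t) \in colclasses A.
Proof. exact: imset_f. Qed.

Lemma mulmx_const_one p (M : 'M[F]_(p, k)) i :
  (M *m (const_mx 1 : 'cV[F]_k)) i 0 = \sum_j M i j.
Proof. by rewrite mxE; apply: eq_bigr => j _; rewrite mxE mulr1. Qed.

Lemma classmx_const_one t : (classmx *m (const_mx 1 : 'cV[F]_k)) t 0 = csum t.
Proof.
rewrite mulmx_const_one /csum [RHS]big_mkcond.
by apply: eq_bigr => j _; rewrite mxE eq_sym.
Qed.

Hypothesis nzcolA : forall j, col j A != 0.

Lemma scalecol_inj j : injective (fun c : F => c *: col j A).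
Proof.
move=> c c' /= /eqP; rewrite -subr_eq0 -scalerBl scaler_eq0 (negbTE (nzcolA j)).
by rewrite orbF subr_eq0 => /eqP.
Qed.

Lemma cscale_clrep t : cscale (clrep t) = 1.
Proof.
apply: (@scalecol_inj (clrep t)) => /=.
by have := col_cscale (clrep t); rewrite crep_clrep scale1r => <-.
Qed.

Lemma preserves_cscaled (b : 'rV[F]_k) :
  preserves_classes A b -> cscaled (b 0).
Proof.
move=> presb j; have := presb j (crep j); rewrite colequiv_crep.
case/existsP => c /andP[_ /eqP]; rewrite !col_col_mx scale_col_mx.
case/eq_col_mx => Aj bj.
have c_eq : c = cscale j by apply: (@scalecol_inj (crep j)); rewrite /= -Aj col_cscale.
by have := congr1 (fun v : 'cV_1 => v 0 0) bj; rewrite /= !mxE c_eq.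
Qed.

Lemma class_sums_zero_csum t :
  class_sums_zero A (colclass A (clrep t)) -> csum t = 0.
Proof.
rewrite /class_sums_zero class_sumE => /eqP.
by rewrite scaler_eq0 (negbTE (nzcolA _)) orbF => /eqP.
Qed.

Lemma balanced_submx (b : 'rV[F]_k) t0 :
  row_free A -> (forall i, \sum_j A i j = 0) -> l = m.+1 -> csum t0 != 0 ->
  \sum_j b 0 j = 0 -> preserves_classes A b -> (b <= A)%MS.
Proof.
move=> freeA rowsum0 lm st0 bal presb; have bc := preserves_cscaled presb.
set s := classmx *m (const_mx 1 : 'cV[F]_k).
have Vs : repcols *m s = 0.
  by apply/colP => i; rewrite mulmxA repcols_classmx mulmx_const_one rowsum0 mxE.
have bs : crow (b 0) *m s = 0.
  apply/rowP => i; rewrite (ord1 i) mulmxA mul_crow_classmx //.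
  rewrite mulmx_const_one mxE -[RHS]bal.
  by apply: eq_bigr => j _; rewrite mxE.
have rank_s : \rank s = 1%N.
  apply/eqP; rewrite eqn_leq rank_leq_col lt0n mxrank_eq0; apply/eqP => s0.
  by move: st0; rewrite -classmx_const_one -/s s0 mxE eqxx.
have Vker : (repcols <= kermx s)%MS by apply/sub_kermxP.
have kerV : (kermx s <= repcols)%MS.
  rewrite -(mxrank_leqif_sup Vker).2 mxrank_ker rank_s (eqP (row_free_repcols freeA)).
  by rewrite lm subn1.
by apply: cscaled_submx bc (submx_trans _ kerV); apply/sub_kermxP.
Qed.

Section Spread.
Hypothesis csum0 : forall t, csum t = 0.
Variables (n : nat) (Z Z' : 'M[F]_(l, n)).

(* The representative of class [t] gets row [t] of [Z], the other members row
   [t] of [Z']; as the scalings in a class sum to zero, the class then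
   contributes its coefficient times row [t] of [Z - Z']. *)
Definition spread j := row (cl j) (if crep j == j then Z else Z').

Lemma sum_class_spread t :
  \sum_(j | cl j == t) cscale j *: spread j = row t (Z - Z').
Proof.
rewrite (bigD1 (clrep t)) ?cl_clrep //= cscale_clrep scale1r.
rewrite {1}/spread crep_clrep eqxx cl_clrep.
have -> : \sum_(j | (cl j == t) && (j != clrep t)) cscale j *: spread j =
          (\sum_(j | (cl j == t) && (j != clrep t)) cscale j) *: row t Z'.
  rewrite scaler_suml; apply: eq_bigr => j /andP[/eqP <- jt].
  by rewrite /spread -clrep_cl eq_sym (negbTE jt).
have := csum0 t; rewrite /csum (bigD1 (clrep t)) ?cl_clrep //= cscale_clrep.
by move/eqP; rewrite addrC addr_eq0 => /eqP ->; rewrite scaleN1r linearB.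
Qed.

Lemma sum_cscaled_spread c :
  cscaled c -> \sum_j c j *: spread j = crow c *m (Z - Z').
Proof.
move=> cc; rewrite mulmx_sum_row (partition_big cl predT) //=.
apply: eq_bigr => t _; rewrite -sum_class_spread scaler_sumr mxE.
by apply: eq_bigr => j /eqP <-; rewrite cc clrep_cl scalerA mulrC.
Qed.

Lemma spread_solution :
  (repcols <= kermx (Z - Z'))%MS -> is_solution A spread.
Proof.
move=> /sub_kermxP VD i.
by rewrite (sum_cscaled_spread (cscaled_row i)) -row_repcols -row_mul VD row0.
Qed.

Lemma spread_Ann_submx b : (kermx (Z - Z') <= repcols)%MS ->
  in_Ann_bal spread b -> preserves_classes A b -> (b <= A)%MS.
Proof.
move=> kerV [bx _] /preserves_cscaled bc.
apply: (cscaled_submx bc) (submx_trans _ kerV); apply/sub_kermxP.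
by rewrite -(sum_cscaled_spread bc).
Qed.

End Spread.

End ColumnClasses.

Theorem lemma6p5 (F : finFieldType) (m k n : nat) (A : 'M[F]_(m, k))
    (S : {set 'rV[F]_n}) :
  typeRC A -> sys_nondegenerate A -> sys_irreducible A ->
  (#|F| ^ (nclasses A + (nclasses A).-1 * n) <= #|S| ^ nclasses A)%N ->
  (nclasses A = m.+1 \/ forall C, C \in colclasses A -> class_sums_zero A C) ->
  exists x : 'I_k -> 'rV[F]_n,
    (forall j, x j \in S) /\ is_solution A x /\
    forall b : 'rV[F]_k, in_Ann_bal x b -> preserves_classes A b ->
      (b <= A)%MS.
Proof.
move=> [rowsum0 _] [freeA nzcolA] _ cardS classes.
rewrite nclassesE in cardS classes.
have [/forallP csum0 | /forallPn[t csum_t]] :=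
  boolP [forall t : 'I_#|creps A|, csum t == 0].
  have {}csum0 t : csum t = 0 := eqP (csum0 t).
  have [Z [Z' [ZS Z'S /andP[kerV Vker]]]] :=
    exists_kermx_pair (row_free_repcols freeA) cardS.
  exists (spread Z Z'); split; first by move=> j; rewrite /spread; case: ifP.
  split; first exact: (spread_solution nzcolA csum0 Vker).
  by move=> b; apply: (spread_Ann_submx nzcolA csum0).
have lm : #|creps A| = m.+1.
  case: classes => // zero; case/eqP: csum_t.
  exact/(class_sums_zero_csum nzcolA)/zero/colclass_clrep_in.
have q_gt0 : (0 < #|F|)%N by apply/card_gt0P; exists 0.
have /card_gt0P[a aS] : (0 < #|S|)%N.
  have : (0 < #|S| ^ m.+1)%N by rewrite -lm (leq_trans _ cardS) // expn_gt0 q_gt0.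
  by rewrite expn_gt0 /= orbF.
exists (fun _ => a); split => //; split.
  by move=> i; rewrite -scaler_suml rowsum0 scale0r.
by move=> b [_ bal]; exact: balanced_submx nzcolA _ _ freeA rowsum0 lm csum_t bal.
Qed.
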